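(* Let $n=2k+1$ with $k\ge 1$. Then $\{a_i,c_i : i=1,2,\ldots,n\}$ is a strong resolving set of $U_n$.
   Context: For $n\ge 3$, $U_n$ is the graph with vertex set $\{a_i,b_i,c_i,d_i,e_i : 1\le i\le n\}$ and edge set $\{a_ia_{i+1}, b_ib_{i+1}, e_ie_{i+1}, a_ib_i, b_ic_i, c_id_i, d_ie_i, c_{i+1}d_i : 1\le i\le n\}$, indices taken modulo $n$. $d$ is the graph distance. A vertex $w$ strongly resolves distinct vertices $u,v$ if $d(v,w)=d(v,u)+d(u,w)$ or $d(u,w)=d(u,v)+d(v,w)$. A set $S$ is a strong resolving set if every two distinct vertices are strongly resolved by some vertex of $S$. *)

From mathcomp Require Import all_boot.
Set Implicit Arguments. Unset Strict Implicit. Unset Printing Implicit Defensive.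

Section Dist.
Variable (V : finType) (adj : rel V).

Definition walk_len (u v : V) (k : nat) : bool :=
  [exists p : k.-tuple V, path adj u p && (last u p == v)].

(* d(u,v) = least k such that a walk of length k joins u and v
   (a shortest walk has at most #|V|-1 edges; value #|V| if disconnected,
   which never happens for the connected graph U_n). *)
Definition gdist (u v : V) : nat := find (walk_len u v) (iota 0 #|V|).

Definition strongly_resolves (w u v : V) : bool :=
  (gdist v w == gdist v u + gdist u w) || (gdist u w == gdist u v + gdist v w).

Definition strong_resolving_set (S : {set V}) : Prop :=
  forall u v : V, u != v -> exists2 w, w \in S & strongly_resolves w u v.
End Dist.

(* The graph U_n.  A vertex is a pair (t, i) with t : 'I_5 the kind
   (0 = a, 1 = b, 2 = c, 3 = d, 4 = e) and i : 'I_n the index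
   (indices 0..n-1 stand for 1..n, taken modulo n). *)
Definition Uvert (n : nat) := ('I_5 * 'I_n)%type.

Definition kind_a := 0. Definition kind_b := 1. Definition kind_c := 2.
Definition kind_d := 3. Definition kind_e := 4.

Definition Uedge (n : nat) (x y : Uvert n) : bool :=
  let: (s, i) := x in let: (t, j) := y in
  let nxt := (j == (i.+1 %% n) :> nat) in
  [||
      [&& s == kind_a :> nat, t == kind_a :> nat & nxt],
      [&& s == kind_b :> nat, t == kind_b :> nat & nxt],
      [&& s == kind_e :> nat, t == kind_e :> nat & nxt],
      [&& s == kind_a :> nat, t == kind_b :> nat & i == j],
      [&& s == kind_b :> nat, t == kind_c :> nat & i == j],
      [&& s == kind_c :> nat, t == kind_d :> nat & i == j],
      [&& s == kind_d :> nat, t == kind_e :> nat & i == j] |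
      [&& s == kind_d :> nat, t == kind_c :> nat & nxt] ].

Definition Uadj (n : nat) : rel (Uvert n) := fun x y => Uedge x y || Uedge y x.

Definition Udist (n : nat) : Uvert n -> Uvert n -> nat := gdist (@Uadj n).

Definition ac_set (n : nat) : {set Uvert n} :=
  [set x : Uvert n | (x.1 == kind_a :> nat) || (x.1 == kind_c :> nat)].

From mathcomp Require Import all_boot zify.
Set Implicit Arguments. Unset Strict Implicit. Unset Printing Implicit Defensive.

(* The distance from (s, i) to (t, j) in U_n depends only on the kinds s, t and on
   the offset j - i mod n, and can be tabulated in closed form ([Utable]).  The
   table is certified to be the graph distance by a potential argument: it vanishes
   at the source, changes by at most one along each edge, and every other vertex
   has a neighbour one step closer to the source.

   With exact distances the resolving vertices can be named: w resolves u and v as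
   soon as u lies on a shortest path from v to w.  A vertex of S resolves every
   pair containing it.  The vertex b_i lies on a shortest path to a_i from every
   vertex that is not an a-vertex.  For u = (s, i) and v = (t, j) of kinds d or e
   with s <= t, u lies on a shortest path from v to c_i when the offset of u from
   v is 0 or exceeds k, and on one to c_(i+1) when it lies in [1, k]; this is
   where n = 2k + 1 being odd is used. *)

Lemma find_iota_first (a : pred nat) N k :
  k < N -> a k -> (forall i, i < k -> ~~ a i) -> find a (iota 0 N) = k.
Proof.
move=> kN ak before_k.
rewrite -(subnKC (ltnW kN)) iotaD find_cat size_iota add0n.
have -> : has a (iota 0 k) = false.
  by apply/hasP => -[i]; rewrite mem_iota => /andP[_ /before_k /negP].
by case: (N - k) (subn_gt0 k N) kN => [|r] //= _ _; rewrite ?ak addn0.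
Qed.

Section GraphDistance.
Variables (V : finType) (adj : rel V).

Lemma gdist_refl x : gdist adj x x = 0.
Proof.
apply: find_iota_first => //; first by apply/card_gt0P; exists x.
by apply/existsP; exists [tuple]; rewrite /= eqxx.
Qed.

Lemma gdist_eq_potential (g : V -> nat) x :
  g x = 0 ->
  (forall y z, adj y z -> g z <= g y + 1) ->
  (forall y, y != x -> exists2 z, adj z y & g z + 1 = g y) ->
  (forall y, g y < #|V|) ->
  forall y, gdist adj x y = g y.
Proof.
move=> gx0 g_lip g_desc g_lt y.
have walk_ge p z : path adj z p -> g (last z p) <= g z + size p.
  elim: p z => [|z' p IHp] z /=; first by rewrite addn0.
  by case/andP=> /g_lip ? /IHp; lia.
have walk_g k y' : g y' = k -> walk_len adj x y' k.
  elim: k y' => [|k IHk] y' gy'.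
    case: (eqVneq y' x) => [->|/g_desc[z _]]; last by lia.
    by apply/existsP; exists [tuple]; rewrite /= eqxx.
  have /g_desc[z zy' gz] : y' != x by apply: contra_eq_neq gy' => ->; rewrite gx0.
  have /existsP[p /andP[xp /eqP px]] := IHk z ltac:(lia).
  apply/existsP; exists (rcons_tuple p y').
  by rewrite /= rcons_path xp px zy' last_rcons eqxx.
apply: find_iota_first => [||i ltiy]; [exact: g_lt | exact: walk_g |].
apply/existsP => -[p /andP[/walk_ge]]; rewrite size_tuple gx0 => + /eqP px.
by rewrite px; lia.
Qed.

Lemma strongly_resolvesC w u v :
  strongly_resolves adj w u v = strongly_resolves adj w v u.
Proof. exact: orbC. Qed.

Lemma strongly_resolves_refl u v : strongly_resolves adj u u v.
Proof. by rewrite /strongly_resolves gdist_refl addn0 eqxx. Qed.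

End GraphDistance.

Definition cdist n m := minn m (n - m).
(* the cyclic distance of m - 1 modulo n, for m < n *)
Definition cdist_pred n m := minn (maxn (m - 1) (1 - m)) (n + 1 - m).
Definition cc_len c := minn (2 * c) (c + 2).

(* Utable n s t m is the distance from a vertex of kind s and index i to the vertex
   of kind t and index i + m (mod n).  Shortest paths run along the a-, b- and
   e-cycles or along the zigzag c_i d_i c_(i+1) d_(i+1) ..., which joins c_i to
   c_(i+m) in 2m steps against m + 2 through the b-cycle; d_j is entered from c_j
   or from c_(j+1). *)
Definition Utable n (s t m : nat) : nat :=
  match s, t with
  | 0, 0 => cdist n m
  | 0, 1 => cdist n m + 1
  | 0, 2 => cdist n m + 2
  | 0, 3 => minn (cdist n m) (cdist n m.+1) + 3
  | 0, 4 => minn (cdist n m) (cdist n m.+1) + 4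
  | 1, 0 => cdist n m + 1
  | 1, 1 => cdist n m
  | 1, 2 => cdist n m + 1
  | 1, 3 => minn (cdist n m) (cdist n m.+1) + 2
  | 1, 4 => minn (cdist n m) (cdist n m.+1) + 3
  | 2, 0 => cdist n m + 2
  | 2, 1 => cdist n m + 1
  | 2, 2 => cc_len (cdist n m)
  | 2, 3 => minn (cc_len (cdist n m)) (cc_len (cdist n m.+1)) + 1
  | 2, 4 => minn (cdist n m) (cdist n m.+1) + 2
  | 3, 0 => minn (cdist n m) (cdist_pred n m) + 3
  | 3, 1 => minn (cdist n m) (cdist_pred n m) + 2
  | 3, 2 => minn (cc_len (cdist n m)) (cc_len (cdist_pred n m)) + 1
  | 3, 3 => cc_len (cdist n m)
  | 3, 4 => cdist n m + 1
  | 4, 0 => minn (cdist n m) (cdist_pred n m) + 4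
  | 4, 1 => minn (cdist n m) (cdist_pred n m) + 3
  | 4, 2 => minn (cdist n m) (cdist_pred n m) + 2
  | 4, 3 => cdist n m + 1
  | 4, 4 => cdist n m
  | _, _ => 0
  end.

Definition succ_mod n m m' := (m.+1 < n /\ m' = m.+1) \/ (m.+1 = n /\ m' = 0).

Ltac no_minmax t :=
  lazymatch t with context [minn _ _] => fail | context [maxn _ _] => fail | _ => idtac end.
Ltac split_minmax := repeat match goal with
  | |- context [minn ?a ?b] => no_minmax a; no_minmax b; case: (leqP a b) => ?; try (exfalso; lia)
  | |- context [maxn ?a ?b] => no_minmax a; no_minmax b; case: (leqP a b) => ?; try (exfalso; lia)
  end.
Ltac solve_disj := first [left; lia | right; solve_disj | lia].
Ltac table_arith := rewrite /Utable /cdist /cdist_pred /cc_len; split_minmax; solve_disj.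
Ltac case_kind s lt5 := case: s lt5 => [|[|[|[|[|?]]]]] // _.

Lemma Utable_lip_cycle n s t m m' :
  3 <= n -> m < n -> succ_mod n m m' -> s < 5 -> t \in [:: 0; 1; 4] ->
  Utable n s t m' <= Utable n s t m + 1 /\ Utable n s t m <= Utable n s t m' + 1.
Proof.
move=> n3 mn [[? ->]|[? ->]] s5; case_kind s s5; rewrite !inE;
  case/or3P => /eqP->; table_arith.
Qed.

Lemma Utable_lip_spoke n s t m : 3 <= n -> m < n -> s < 5 -> t < 4 ->
  Utable n s t.+1 m <= Utable n s t m + 1 /\ Utable n s t m <= Utable n s t.+1 m + 1.
Proof. by move=> n3 mn s5 t4; case_kind s s5; case: t t4 => [|[|[|[|?]]]] // _; table_arith. Qed.

Lemma Utable_lip_chord n s m m' : 3 <= n -> m < n -> succ_mod n m m' -> s < 5 ->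
  Utable n s 2 m' <= Utable n s 3 m + 1 /\ Utable n s 3 m <= Utable n s 2 m' + 1.
Proof. by move=> n3 mn [[? ->]|[? ->]] s5; case_kind s s5; table_arith. Qed.

Ltac descent_arith s :=
  move=> ? ? ? [[? ?]|[? ?]] [[? ?]|[? ?]]; subst;
  case: s => [|[|[|[|[|?]]]]] //= _ ?; table_arith.

Lemma Utable_descent_a n s m mS mP :
  3 <= n -> m < n -> mP < n -> succ_mod n m mS -> succ_mod n mP m -> s < 5 ->
  ~ (s = 0 /\ m = 0) -> let f := Utable n s in
  f 0 mS + 1 = f 0 m \/ f 0 mP + 1 = f 0 m \/ f 1 m + 1 = f 0 m.
Proof. descent_arith s. Qed.

Lemma Utable_descent_b n s m mS mP :
  3 <= n -> m < n -> mP < n -> succ_mod n m mS -> succ_mod n mP m -> s < 5 ->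
  ~ (s = 1 /\ m = 0) -> let f := Utable n s in
  f 1 mS + 1 = f 1 m \/ f 1 mP + 1 = f 1 m \/ f 0 m + 1 = f 1 m \/ f 2 m + 1 = f 1 m.
Proof. descent_arith s. Qed.

Lemma Utable_descent_c n s m mS mP :
  3 <= n -> m < n -> mP < n -> succ_mod n m mS -> succ_mod n mP m -> s < 5 ->
  ~ (s = 2 /\ m = 0) -> let f := Utable n s in
  f 1 m + 1 = f 2 m \/ f 3 m + 1 = f 2 m \/ f 3 mP + 1 = f 2 m.
Proof. descent_arith s. Qed.

Lemma Utable_descent_d n s m mS mP :
  3 <= n -> m < n -> mP < n -> succ_mod n m mS -> succ_mod n mP m -> s < 5 ->
  ~ (s = 3 /\ m = 0) -> let f := Utable n s in
  f 2 m + 1 = f 3 m \/ f 2 mS + 1 = f 3 m \/ f 4 m + 1 = f 3 m.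
Proof. descent_arith s. Qed.

Lemma Utable_descent_e n s m mS mP :
  3 <= n -> m < n -> mP < n -> succ_mod n m mS -> succ_mod n mP m -> s < 5 ->
  ~ (s = 4 /\ m = 0) -> let f := Utable n s in
  f 4 mS + 1 = f 4 m \/ f 4 mP + 1 = f 4 m \/ f 3 m + 1 = f 4 m.
Proof. descent_arith s. Qed.

Lemma Utable_self n s : Utable n s s 0 = 0.
Proof. by case: s => [|[|[|[|[|?]]]]]; table_arith. Qed.

Lemma Utable_bound n s t m : m < n -> Utable n s t m <= n + 4.
Proof. by move=> mn; case: s => [|[|[|[|[|?]]]]]; case: t => [|[|[|[|[|?]]]]]; table_arith. Qed.

Lemma Utable_via_b n t m : 3 <= n -> m < n -> 0 < t < 5 ->
  Utable n t 0 m = Utable n t 1 m + 1.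
Proof. by move=> n3 mn; case: t => [|[|[|[|[|?]]]]] //= _; table_arith. Qed.

Lemma Utable_via_c_same n k s t m :
  n = 2 * k + 1 -> m < n -> 3 <= s <= t -> t < 5 -> m = 0 \/ k < m ->
  Utable n t 2 m = Utable n t s m + Utable n s 2 0.
Proof.
move=> n2k mn /andP[s3 st]; case: t st => [|[|[|[|[|?]]]]] //;
  case: s s3 => [|[|[|[|[|?]]]]] //; table_arith.
Qed.

Lemma Utable_via_c_next n k s t m m' :
  n = 2 * k + 1 -> 1 <= k -> m < n -> succ_mod n m m' -> 3 <= s <= t -> t < 5 -> 0 < m <= k ->
  Utable n t 2 m' = Utable n t s m + Utable n s 2 1.
Proof.
move=> n2k k1 mn [[? ->]|[? ->]] /andP[s3 st]; case: t st => [|[|[|[|[|?]]]]] //;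
  case: s s3 => [|[|[|[|[|?]]]]] //; table_arith.
Qed.

Definition Uoffset n (i j : nat) := (j + n - i) %% n.

Definition Uformula n (x y : Uvert n) := Utable n x.1 y.1 (Uoffset n x.2 y.2).

Lemma modn_lt_double n x :
  x < n + n -> (x < n /\ x %% n = x) \/ (n <= x /\ x %% n = x - n).
Proof.
case: (ltnP x n) => [lt_xn | le_nx] lt_x2n; [left; rewrite modn_small | right] => //.
by rewrite -{1}(subnK le_nx) modnDr modn_small; lia.
Qed.

Ltac no_mod t n := lazymatch t with context [_ %% n] => fail | _ => idtac end.
Ltac offset_arith n := rewrite /succ_mod /Uoffset;
  repeat match goal with |- context [?x %% n] =>
    no_mod x n; have [[? ->]|[? ->]] := @modn_lt_double n x ltac:(lia) end; lia.

Section Offset.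
Variables (n i j : nat).
Hypotheses (n_gt0 : 0 < n) (i_lt : i < n) (j_lt : j < n).

Lemma Uoffset_lt : Uoffset n i j < n.
Proof. exact: ltn_pmod. Qed.

Lemma Uoffset_succ : succ_mod n (Uoffset n i j) (Uoffset n i (j.+1 %% n)).
Proof. offset_arith n. Qed.

Lemma Uoffset_eq0 : Uoffset n i j = 0 -> i = j.
Proof. offset_arith n. Qed.

End Offset.

Lemma Uoffset_self n i : Uoffset n i i = 0.
Proof. by rewrite /Uoffset addKn modnn. Qed.

Lemma Uoffset_succ_self n i : 1 < n -> i < n -> Uoffset n i (i.+1 %% n) = 1.
Proof. by move=> n_gt1 i_lt; offset_arith n. Qed.

Lemma Uformula_lip n (x y z : Uvert n) : 3 <= n -> Uedge y z ->
  Uformula x z <= Uformula x y + 1 /\ Uformula x y <= Uformula x z + 1.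
Proof.
case: x y z => s i [t j] [t' j'] n3; have n_gt0 : 0 < n by lia.
have s5 := ltn_ord s; have m_lt := @Uoffset_lt n i j n_gt0.
have m_succ := Uoffset_succ n_gt0 (ltn_ord i) (ltn_ord j).
rewrite /Uedge /Uformula /= /kind_a /kind_b /kind_c /kind_d /kind_e.
move=> /orP[|/orP[|/orP[|/orP[|/orP[|/orP[|/orP[|]]]]]]] /and3P[/eqP-> /eqP-> /eqP E].
- by rewrite E; apply: Utable_lip_cycle.
- by rewrite E; apply: Utable_lip_cycle.
- by rewrite E; apply: Utable_lip_cycle.
- by rewrite -E; have := @Utable_lip_spoke n s 0 _ n3 m_lt s5 isT; lia.
- by rewrite -E; have := @Utable_lip_spoke n s 1 _ n3 m_lt s5 isT; lia.
- by rewrite -E; have := @Utable_lip_spoke n s 2 _ n3 m_lt s5 isT; lia.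
- by rewrite -E; have := @Utable_lip_spoke n s 3 _ n3 m_lt s5 isT; lia.
- by rewrite E; have := Utable_lip_chord n3 m_lt m_succ s5; lia.
Qed.

Lemma ord_pred_succ n (j : 'I_n) : j = (ord_pred j).+1 %% n :> nat.
Proof. by rewrite -[in LHS](ord_predK j). Qed.

Ltac Uadj_by_edge j := rewrite /Uadj /Uedge /= -?(ord_pred_succ j) ?eqxx /= ?orbT.

Lemma Uformula_descent n (x y : Uvert n) : 3 <= n -> y != x ->
  exists2 z, Uadj z y & Uformula x z + 1 = Uformula x y.
Proof.
case: x y => s i [t j] n3 y_neq_x; have n_gt0 : 0 < n by lia.
have s5 := ltn_ord s.
have m_lt := @Uoffset_lt n i j n_gt0.
have mP_lt := @Uoffset_lt n i (ord_pred j) n_gt0.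
have m_succ := Uoffset_succ n_gt0 (ltn_ord i) (ltn_ord j).
have mP_succ : succ_mod n (Uoffset n i (ord_pred j)) (Uoffset n i j).
  by rewrite [in X in succ_mod _ _ X](ord_pred_succ j); apply: Uoffset_succ.
have m_ne0 : ~ (s = t :> nat /\ Uoffset n i j = 0).
  case=> st /(Uoffset_eq0 n_gt0 (ltn_ord i) (ltn_ord j)) ij.
  by move/eqP: y_neq_x; apply; congr pair; apply: val_inj.
rewrite /Uformula /=; case: t y_neq_x m_ne0 => [[|[|[|[|[|?]]]]] t5] //= _ m_ne0.
- have [E|[E|E]] := Utable_descent_a n3 m_lt mP_lt m_succ mP_succ s5 m_ne0.
  + by exists (Ordinal t5, ordS j); [Uadj_by_edge j | exact: E].
  + by exists (Ordinal t5, ord_pred j); [Uadj_by_edge j | exact: E].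
  + by exists (@Ordinal 5 1 isT, j); [Uadj_by_edge j | exact: E].
- have [E|[E|[E|E]]] := Utable_descent_b n3 m_lt mP_lt m_succ mP_succ s5 m_ne0.
  + by exists (Ordinal t5, ordS j); [Uadj_by_edge j | exact: E].
  + by exists (Ordinal t5, ord_pred j); [Uadj_by_edge j | exact: E].
  + by exists (@Ordinal 5 0 isT, j); [Uadj_by_edge j | exact: E].
  + by exists (@Ordinal 5 2 isT, j); [Uadj_by_edge j | exact: E].
- have [E|[E|E]] := Utable_descent_c n3 m_lt mP_lt m_succ mP_succ s5 m_ne0.
  + by exists (@Ordinal 5 1 isT, j); [Uadj_by_edge j | exact: E].
  + by exists (@Ordinal 5 3 isT, j); [Uadj_by_edge j | exact: E].
  + by exists (@Ordinal 5 3 isT, ord_pred j); [Uadj_by_edge j | exact: E].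
- have [E|[E|E]] := Utable_descent_d n3 m_lt mP_lt m_succ mP_succ s5 m_ne0.
  + by exists (@Ordinal 5 2 isT, j); [Uadj_by_edge j | exact: E].
  + by exists (@Ordinal 5 2 isT, ordS j); [Uadj_by_edge j | exact: E].
  + by exists (@Ordinal 5 4 isT, j); [Uadj_by_edge j | exact: E].
- have [E|[E|E]] := Utable_descent_e n3 m_lt mP_lt m_succ mP_succ s5 m_ne0.
  + by exists (Ordinal t5, ordS j); [Uadj_by_edge j | exact: E].
  + by exists (Ordinal t5, ord_pred j); [Uadj_by_edge j | exact: E].
  + by exists (@Ordinal 5 3 isT, j); [Uadj_by_edge j | exact: E].
Qed.

Lemma gdist_Uadj n (x y : Uvert n) : 3 <= n -> gdist (@Uadj n) x y = Uformula x y.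
Proof.
move=> n3; apply: gdist_eq_potential => {y} [|y z /orP[] /(Uformula_lip x n3) | y | y]; try lia.
- by case: x => s i; rewrite /Uformula /= Uoffset_self Utable_self.
- exact: Uformula_descent.
- rewrite card_prod !card_ord /Uformula.
  by apply: leq_ltn_trans (Utable_bound _ _ (Uoffset_lt _ _ _)) _; lia.
Qed.

Lemma strongly_resolves_b n (u v : Uvert n) :
  3 <= n -> u.1 = 1 :> nat -> 0 < v.1 -> strongly_resolves (@Uadj n) (ord0, u.2) u v.
Proof.
case: u v => s i [t j] n3 /= s1 t_gt0; have n_gt0 : 0 < n by lia.
apply/orP; left; rewrite !gdist_Uadj // /Uformula /= Uoffset_self s1.
by rewrite Utable_via_b ?ltn_ord ?t_gt0 ?Uoffset_lt //= /cdist min0n.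
Qed.

Lemma strongly_resolves_de n k (u v : Uvert n) :
  1 <= k -> n = 2 * k + 1 -> 3 <= u.1 <= v.1 ->
  exists2 w, w \in ac_set n & strongly_resolves (@Uadj n) w u v.
Proof.
case: u v => s i [t j] k1 n2k /= st.
have n3 : 3 <= n by lia.
have n_gt0 : 0 < n by lia.
have m_lt := @Uoffset_lt n j i n_gt0.
have [m_same | m_next] : (Uoffset n j i = 0 \/ k < Uoffset n j i) \/ 0 < Uoffset n j i <= k.
  by lia.
- exists (@Ordinal 5 2 isT, i); first by rewrite inE.
  apply/orP; left; rewrite !gdist_Uadj // /Uformula /= Uoffset_self; apply/eqP.
  exact: Utable_via_c_same n2k m_lt st (ltn_ord t) m_same.
- exists (@Ordinal 5 2 isT, ordS i); first by rewrite inE.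
  apply/orP; left; rewrite !gdist_Uadj // /Uformula /=.
  rewrite (Uoffset_succ_self (ltnW n3) (ltn_ord i)); apply/eqP.
  exact: Utable_via_c_next n2k k1 m_lt (Uoffset_succ _ _ _) st (ltn_ord t) m_next.
Qed.

Theorem lemma4p6 (k n : nat) (hk : 1 <= k) (hn : n = 2 * k + 1) :
  strong_resolving_set (@Uadj n) (ac_set n).
Proof.
have n3 : 3 <= n by lia.
move=> u v _; wlog le_uv : u v / u.1 <= v.1.
  move=> resolve; case: (leqP u.1 v.1) => [|/ltnW/(resolve v u) [w S_w res_w]].
    exact: resolve.
  exists w; [exact: S_w | rewrite strongly_resolvesC; exact: res_w].
case: (boolP (u \in ac_set n)) => [S_u | ].
  by exists u; last exact: strongly_resolves_refl.
case: u le_uv => s i /= le_uv; rewrite inE /= /kind_a /kind_c => u_notin_S.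
have [s_b | s_de] : s = 1 :> nat \/ 3 <= s by have := ltn_ord s; lia.
- by exists (ord0, i); [rewrite inE | apply: strongly_resolves_b => /=; lia].
- by apply: (strongly_resolves_de hk hn); rewrite /= s_de.
Qed.
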